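(* Let $\mathcal H$ be a hypothesis class with coVC dimension $k>0$. For any sample $S$ not realizable by $\mathcal H$ and any $h_1,\dots,h_T\in\mathcal H$, there is $(x,y)\in S$ such that $\frac1T\sum_{t=1}^T1[h_t(x)\ne y]\ge\frac1k$.
   Context: A sample is a finite sequence of examples $(x,y)\in\mathcal X\times\{\pm1\}$; it is realizable by $\mathcal H$ if some $h\in\mathcal H$ agrees with all its examples. A subsample of $S$ is a sample all of whose examples appear in $S$; the coVC dimension of $\mathcal H$ is the smallest $k$ such that every non-realizable sample has a non-realizable subsample of size at most $k$. *)

From mathcomp Require Import all_boot all_algebra.
From Stdlib Require List.
Set Implicit Arguments. Unset Strict Implicit. Unset Printing Implicit Defensive.

(* Labels {+1,-1} are represented by bool (true = +1, false = -1).
   A hypothesis is a function X -> bool; a hypothesis class is a set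
   of hypotheses, i.e. a predicate on (X -> bool). *)

Definition sample (X : Type) := seq (X * bool).

Definition realizable (X : Type) (H : (X -> bool) -> Prop) (S : sample X) :=
  exists h, H h /\ forall p, List.In p S -> h p.1 = p.2.

Definition subsample (X : Type) (S' S : sample X) :=
  forall p, List.In p S' -> List.In p S.

Definition coVC_bound (X : Type) (H : (X -> bool) -> Prop) (k : nat) :=
  forall S : sample X, ~ realizable H S ->
    exists S' : sample X, [/\ subsample S' S, ~ realizable H S' & size S' <= k].

Definition coVC_dim (X : Type) (H : (X -> bool) -> Prop) (k : nat) :=
  coVC_bound H k /\ forall k', coVC_bound H k' -> k <= k'.

From mathcomp Require Import all_boot all_algebra.
Set Implicit Arguments.
Unset Strict Implicit.
Unset Printing Implicit Defensive.

Import GRing.Theory Num.Theory.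
Local Open Scope ring_scope.

(* The coVC bound yields a non-realizable S' within S of size at most k. Every
   h_t errs somewhere on S', so S' carries at least T mistakes in total, and by
   averaging some example of S' carries at least T / size S' >= T / k of them. *)

Section SeqSums.

Variable A : Type.

Lemma leq_sum_In (s : seq A) (F : A -> nat) (p : A) :
  List.In p s -> (F p <= \sum_(q <- s) F q)%N.
Proof.
elim: s => [|a s IHs] //=; rewrite big_cons => -[<-|ps]; first exact: leq_addr.
by rewrite (leq_trans (IHs ps)) ?leq_addl.
Qed.

Lemma exists_In_sum_le_size_mul (s : seq A) (F : A -> nat) :
  (0 < size s)%N -> exists2 p, List.In p s & (\sum_(q <- s) F q <= size s * F p)%N.
Proof.
elim: s => [|a s IHs] // _; rewrite big_cons.
case: s IHs => [_|b s IHs].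
  by exists a; [left | rewrite big_nil addn0 mul1n].
have [p ps le_sum] := IHs isT.
have [le_ap|lt_pa] := leqP (F a) (F p).
- exists p; first by right.
  by rewrite mulSn leq_add.
- exists a; first by left.
  by rewrite mulSn leq_add // (leq_trans le_sum) // leq_mul2l ltnW ?orbT.
Qed.

End SeqSums.

Section Mistakes.

Variables (X : Type) (H : (X -> bool) -> Prop).

Lemma sum_mistakes_gt0 (S : sample X) (h : X -> bool) :
  ~ realizable H S -> H h -> (0 < \sum_(p <- S) (h p.1 != p.2))%N.
Proof.
rewrite lt0n => nrS Hh; apply/negP => /eqP no_mistakes.
apply: nrS; exists h; split=> // p pS.
have := leq_sum_In (fun q => nat_of_bool (h q.1 != q.2)) pS.
by rewrite no_mistakes leqn0 eqb0 negbK => /eqP.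
Qed.

Lemma total_mistakes_ge (S : sample X) (T : nat) (h : 'I_T -> X -> bool) :
  ~ realizable H S -> (forall t, H (h t)) ->
  (T <= \sum_(p <- S) \sum_(t < T) (h t p.1 != p.2))%N.
Proof.
move=> nrS Hh; rewrite exchange_big /= -[T in (T <= _)%N]card_ord -sum1_card.
by apply: leq_sum => t _; apply: sum_mistakes_gt0.
Qed.

End Mistakes.

Lemma ler_inv_divn (R : numFieldType) (k T n : nat) :
  (0 < k)%N -> (0 < T)%N -> (T <= k * n)%N -> 1 / k%:R <= n%:R / T%:R :> R.
Proof.
move=> k_gt0 T_gt0 le_T_kn.
rewrite ler_pdivlMr ?ltr0n // mulrC mulrA ler_pdivrMr ?ltr0n //.
by rewrite mulr1 -natrM ler_nat mulnC.
Qed.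

Theorem claim1 (X : Type) (H : (X -> bool) -> Prop) (k : nat)
    (S : sample X) (T : nat) (h : 'I_T -> X -> bool) :
  coVC_dim H k -> (0 < k)%N -> ~ realizable H S -> (0 < T)%N ->
  (forall t, H (h t)) ->
  exists2 p, List.In p S &
    1 / k%:R <= (\sum_(t < T) ((h t p.1 != p.2)%:R : rat)) / T%:R.
Proof.
move=> [coVC _] k_gt0 nrS T_gt0 Hh.
have [S' [subS' nrS' size_S']] := coVC S nrS.
pose mistakes (p : X * bool) := (\sum_(t < T) (h t p.1 != p.2))%N.
have le_T_mistakes := total_mistakes_ge nrS' Hh.
have S'_gt0 : (0 < size S')%N.
  case: S' {subS' nrS' size_S'} le_T_mistakes => [|//].
  by rewrite big_nil leqn0 => /eqP T0; rewrite T0 in T_gt0.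
have [p pS' le_sum] := exists_In_sum_le_size_mul mistakes S'_gt0.
exists p; first exact: subS'.
rewrite -natr_sum; apply: ler_inv_divn => //.
by rewrite (leq_trans le_T_mistakes) // (leq_trans le_sum) // leq_mul2r size_S' orbT.
Qed.
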